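(* The hypersurface Dirac operator $D_{B} (s) = -\frac{1}{2}\sum_{i,j=1}^4 [\gamma_{\theta}^{j},\gamma_{\theta}^{i}]_\theta^{}\, \partial^\theta_i s \star_\theta z_j - \frac{3}{2}\, s$ on $\mathbb{S}^3_\theta$ coincides with the Connes–Landi Dirac operator $D_{\mathrm{CL}}(s) = -\frac{1}{2}\sum_{i,j=1}^4 [\gamma^{j},\gamma^{i}]\, \partial_i s \, z_j - \frac{3}{2}\, s$.
   Context: Let $H=\mathcal{O}(\mathbb{T}^2)$ with basis $t_{(n_1,n_2)}$, and consider its left coaction on the commutative algebra of $\mathbb{R}^4$ given by $\rho(z^1)=t_{(2,0)}\otimes z^1$, $\rho(z^2)=t_{(0,2)}\otimes z^2$, $\rho(z^3)=t_{(-2,0)}\otimes z^3$, $\rho(z^4)=t_{(0,-2)}\otimes z^4$ (complex coordinates, $z^3=\overline{z^1}$, $z^4=\overline{z^2}$), and on spinors $\mathcal{E}=A^4$ by $\rho(e_1)=t_{(1,1)}\otimes e_1$, $\rho(e_2)=t_{(-1,-1)}\otimes e_2$, $\rho(e_3)=t_{(1,-1)}\otimes e_3$, $\rho(e_4)=t_{(-1,1)}\otimes e_4$. With the 2-cocycle $\sigma_\theta(t_{(n_1,n_2)}\otimes t_{(m_1,m_2)}) = \exp(\tfrac{i\theta}{4}(n_1m_2-n_2m_1))$ one defines $a\star_\theta a' = \sigma_\theta(a_{(-1)}\otimes a'_{(-1)})\,a_{(0)}a'_{(0)}$ and $a\star_\theta s$ similarly; this yields the algebra $B$ of the Connes–Landi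 sphere $\mathbb{S}^3_\theta$ (quotient of $\mathbb{R}^4_\theta$ by $f=\tfrac12(\sum g_{ij}z^iz^j-1)$, with $(g_{ij})=\tfrac12$ times the matrix with rows $(0,0,1,0),(0,0,0,1),(1,0,0,0),(0,1,0,0)$) and its spinor module $\mathcal{E}_B=\mathcal{E}/f\mathcal{E}$. Here $z_j=\sum_k g_{jk}z^k$, $\gamma^i_\theta$ are the $\theta$-deformed gamma matrices, $\gamma^i$ their undeformed versions ($\theta=0$), $[\gamma^j_\theta,\gamma^i_\theta]_\theta=\gamma^j_\theta\gamma^i_\theta-R^{ij}\gamma^i_\theta\gamma^j_\theta$ with $R$ the commutation-relation matrix of $\mathbb{R}^4_\theta$, $\partial^\theta_i$ is defined by $\mathrm{d} a=\partial^\theta_i a\star_\theta\mathrm{d} z^i$ and $\partial_i$ by $\mathrm{d} a = \partial_i a\,\mathrm{d} z^i$ with the undeformed module structure. $D_B$ is the Dirac operator $\gamma_B\circ\nabla^{\mathrm{sp}}_B$ induced on $\mathbb{S}^3_\theta$ from the flat spinorial structure on $\mathbb{R}^4_\theta$ (expressed in terms of star-products), and $D_{\mathrm{CL}}$ is the classical Dirac operator on $\mathbb{S}^3$ regarded as an operator on the deformed spinor module. Both satisfy $D(a\star_\theta s) = a\star_\theta D(s)+\gamma_{\mathbb{S}^3}(\mathrm{d} a\otimes_{B}s)$ with the deformed tensor product and classical Clifford multiplication $\gamma_{\mathbb{S}^3}$. *)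

From HB Require Import structures.
From mathcomp Require Import all_boot all_algebra.
From mathcomp Require Import mpoly.
From mathcomp Require Import Rstruct.
From mathcomp.real_closed Require Import complex.
From Stdlib Require Import Reals.

Set Implicit Arguments.
Unset Strict Implicit.
Unset Printing Implicit Defensive.
Import GRing.Theory.
Local Open Scope ring_scope.

(* Complex numbers and the commutative algebra O(R^4) in complex coordinates
   z^1..z^4 (indices 0..3 here). *)
Definition Cx := complex Rdefinitions.R.
Definition Alg := {mpoly Cx[4]}.

(* Z^2-degrees (basis t_(n1,n2) of O(T^2)). *)
Definition deg2 := (int * int)%type.
Definition addd (a b : deg2) : deg2 := (a.1 + b.1, a.2 + b.2).

Definition degz (i : 'I_4) : deg2 :=
  match val i with
  | 0 => (2%:Z, 0%:Z) | 1 => (0%:Z, 2%:Z) | 2 => (- 2%:Z, 0%:Z) | _ => (0%:Z, - 2%:Z)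
  end.
Definition dege (k : 'I_4) : deg2 :=
  match val k with
  | 0 => (1%:Z, 1%:Z) | 1 => (- 1%:Z, - 1%:Z) | 2 => (1%:Z, - 1%:Z) | _ => (- 1%:Z, 1%:Z)
  end.

Definition degm (m : 'X_{1..4}) : deg2 :=
  (\sum_(i < 4) (m i)%:Z * (degz i).1, \sum_(i < 4) (m i)%:Z * (degz i).2).

Definition phase (th : Rdefinitions.R) (k : int) : Cx :=
  Complex (cos (th * k%:~R / 4)) (sin (th * k%:~R / 4)).

Definition sigma (th : Rdefinitions.R) (n m : deg2) : Cx :=
  phase th (n.1 * m.2 - n.2 * m.1).

Definition star (th : Rdefinitions.R) (a b : Alg) : Alg :=
  \sum_(m <- msupp a) \sum_(n <- msupp b)
     (a@_m * b@_n * sigma th (degm m) (degm n)) *: 'X_[m + n].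

(* b *_theta x  where x is a homogeneous generator of degree d (dz^i or e_k)
   of a free module; the result is the (undeformed) coefficient of x. *)
Definition twist (th : Rdefinitions.R) (b : Alg) (d : deg2) : Alg :=
  \sum_(m <- msupp b) (b@_m * sigma th (degm m) d) *: 'X_[m].

(* metric g_ij = 1/2 * [[0,0,1,0],[0,0,0,1],[1,0,0,0],[0,1,0,0]] *)
Definition gmet (i j : 'I_4) : Cx :=
  if (modn (addn (val i) 2) 4 == val j) then 2^-1 else 0.
Definition gmx : 'M[Cx]_4 := \matrix_(i, j) gmet i j.

Definition zlow (j : 'I_4) : Alg := \sum_(k < 4) gmet j k *: 'X_k.

Definition fsph : Alg :=
  2^-1 *: ((\sum_(i < 4) \sum_(j < 4) gmet i j *: ('X_i * 'X_j)) - 1).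

Definition spinor := 'I_4 -> Alg.

Definition gamma_homogeneous (g : 'I_4 -> 'M[Cx]_4) : Prop :=
  forall i m l, g i m l != 0 -> dege m = addd (degz i) (dege l).

(* Clifford relations {gamma^i, gamma^j} = +-2 g^{ij} (either sign convention) *)
Definition gamma_clifford (g : 'I_4 -> 'M[Cx]_4) : Prop :=
  exists eps : Cx, (eps = 1 \/ eps = -1) /\
    forall i j, g i *m g j + g j *m g i = (eps * 2 * (invmx gmx) i j)%:M.

(* theta-deformed gamma matrices:
   gamma_theta(dz^i (x)_theta e_l) = sigma(deg z^i, deg e_l) gamma(dz^i (x) e_l) *)
Definition gammath (th : Rdefinitions.R) (g : 'I_4 -> 'M[Cx]_4) (i : 'I_4) : 'M[Cx]_4 :=
  \matrix_(m, l) (sigma th (degz i) (dege l) * g i m l).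

Definition commth (th : Rdefinitions.R) (g : 'I_4 -> 'M[Cx]_4)
  (Rm : 'I_4 -> 'I_4 -> Cx) (j i : 'I_4) : 'M[Cx]_4 :=
  gammath th g j *m gammath th g i - Rm i j *: (gammath th g i *m gammath th g j).

(* D_B(s) = -1/2 sum_ij [g^j_th, g^i_th]_th d^th_i s *_th z_j - 3/2 s,
   acting on the *_theta-components s = sum_k s^k *_theta e_k *)
Definition DB (th : Rdefinitions.R) (g : 'I_4 -> 'M[Cx]_4)
  (Rm : 'I_4 -> 'I_4 -> Cx) (dth : 'I_4 -> Alg -> Alg) (s : spinor) : spinor :=
  fun k => - (2^-1 : Cx) *:
     (\sum_(i < 4) \sum_(j < 4) \sum_(l < 4)
        (commth th g Rm j i) k l *: star th (dth i (s l)) (zlow j))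
     - ((3 : Cx) / 2) *: s k.

(* D_CL(s) = -1/2 sum_ij [g^j, g^i] d_i s z_j - 3/2 s, on the classical
   components s = sum_k s^k e_k *)
Definition DCL (g : 'I_4 -> 'M[Cx]_4) (c : spinor) : spinor :=
  fun k => - (2^-1 : Cx) *:
     (\sum_(i < 4) \sum_(j < 4) \sum_(l < 4)
        (g j *m g i - g i *m g j) k l *: (mderiv i (c l) * zlow j))
     - ((3 : Cx) / 2) *: c k.

(* classical components of the spinor sum_k s^k *_theta e_k *)
Definition to_classical (th : Rdefinitions.R) (s : spinor) : spinor :=
  fun k => twist th (s k) (dege k).

(* Everything is homogeneous for the T^2-coaction and the cocycle is the bicharacter
   sigma(n, m) = exp(i theta/4 (n1 m2 - n2 m1)).  On classical components, each term
   [gamma_theta^j gamma_theta^i d^theta_i s *_theta z_j] therefore differs from its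
   classical counterpart only by a phase; by homogeneity of the gamma matrices, and
   writing R^{ij} = sigma(z^j, z^i) / sigma(z^i, z^j), the two products in the
   theta-commutator carry the same phase, and bilinearity and antisymmetry of the
   exponent make it cancel against the phases of d^theta_i and of the star product
   with z_j. *)

From Pilot Require Import Defs.
From HB Require Import structures.
From mathcomp Require Import all_boot all_algebra.
From mathcomp Require Import mpoly.
From mathcomp Require Import Rstruct.
From mathcomp.real_closed Require Import complex.
From Stdlib Require Import Reals.
From mathcomp Require Import ring.
Set Implicit Arguments.
Unset Strict Implicit.
Unset Printing Implicit Defensive.
Import GRing.Theory.
Local Open Scope ring_scope.

Section LinearExtension.
Variables (n : nat) (R : nzRingType) (V : lmodType R).

Definition linext (h : 'X_{1..n} -> V) (p : {mpoly R[n]}) : V :=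
  \sum_(m <- msupp p) p@_m *: h m.

Lemma linext_supp h p (r : seq 'X_{1..n}) : uniq r -> {subset msupp p <= r} ->
  linext h p = \sum_(m <- r) p@_m *: h m.
Proof.
move=> ur sub; rewrite /linext [RHS](bigID (fun m => m \in msupp p)) /=.
rewrite [X in _ = _ + X]big1 ?addr0; last first.
  by move=> m /memN_msupp_eq0 ->; rewrite scale0r.
rewrite -[RHS]big_filter; apply: perm_big; apply: uniq_perm.
- exact: msupp_uniq.
- exact: filter_uniq.
by move=> m; rewrite mem_filter; case E: (m \in msupp p) => //=; rewrite (sub _ E).
Qed.

Lemma linextD h p q : linext h (p + q) = linext h p + linext h q.
Proof.
set r := undup (msupp p ++ msupp q ++ msupp (p + q)).
rewrite !(@linext_supp h _ r) ?undup_uniq //; last 3 first.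
1-3: by move=> m m_supp; rewrite mem_undup !mem_cat m_supp ?orbT.
by rewrite -big_split /=; apply: eq_bigr => m _; rewrite mcoeffD scalerDl.
Qed.

Lemma linextZ h c p : linext h (c *: p) = c *: linext h p.
Proof.
rewrite (@linext_supp h _ (msupp p)) ?msupp_uniq //; last exact: msuppZ_le.
by rewrite /linext scaler_sumr; apply: eq_bigr => m _; rewrite mcoeffZ scalerA.
Qed.

Lemma linext0 h : linext h 0 = 0.
Proof. by rewrite /linext msupp0 big_nil. Qed.

Lemma linextX h m : linext h 'X_[m] = h m.
Proof. by rewrite /linext msuppX big_seq1 mcoeffX eqxx scale1r. Qed.

Lemma eq_linext h1 h2 : h1 =1 h2 -> linext h1 =1 linext h2.
Proof. by move=> eq_h p; apply: eq_bigr => m _; rewrite eq_h. Qed.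

End LinearExtension.

Lemma linext_comp n (R : nzRingType) (V : lmodType R)
    (h : 'X_{1..n} -> {mpoly R[n]}) (h' : 'X_{1..n} -> V) p :
  linext h' (linext h p) = linext (linext h' \o h) p.
Proof.
elim/mpolyind: p => [|c m p _ _ IH]; first by rewrite !linext0.
by rewrite !linextD !linextZ !linextX IH.
Qed.

Lemma linext_id n (R : nzRingType) (p : {mpoly R[n]}) :
  linext (fun m => 'X_[m]) p = p.
Proof. by rewrite /linext -mpolyE. Qed.

Lemma mx_entryB (R : pzRingType) m n (A B : 'M[R]_(m, n)) i j :
  (A - B) i j = A i j - B i j.
Proof. by rewrite !mxE. Qed.

Lemma mx_entryZ (R : pzRingType) m n c (A : 'M[R]_(m, n)) i j :
  (c *: A) i j = c * A i j.
Proof. by rewrite mxE. Qed.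

Lemma phaseD th k1 k2 : phase th k1 * phase th k2 = phase th (k1 + k2).
Proof.
rewrite /phase /GRing.mul /=.
have -> : (th * (k1 + k2)%:~R / 4 = th * k1%:~R / 4 + th * k2%:~R / 4)%R.
  have -> : ((k1 + k2)%:~R = Rplus k1%:~R k2%:~R :> Rdefinitions.R).
    by rewrite rmorphD RplusE.
  by rewrite /Rdiv Rmult_plus_distr_l Rmult_plus_distr_r.
rewrite cos_plus sin_plus.
by congr Complex; rewrite ?RminusE ?RplusE ?RmultE // addrC.
Qed.

Lemma phase0 th : phase th 0 = 1.
Proof.
rewrite /phase.
have -> : (th * (0:int)%:~R / 4 = 0)%R by rewrite mulr0z /Rdiv !RmultE mulr0 mul0r.
by rewrite cos_0 sin_0.
Qed.

Definition wedge (a b : deg2) : int := a.1 * b.2 - a.2 * b.1.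
Definition oppd (a : deg2) : deg2 := (- a.1, - a.2).

Lemma adddC : commutative addd.
Proof. by move=> a b; rewrite /addd addrC [a.2 + _]addrC. Qed.

Lemma sigmaE th a b : Defs.sigma th a b = phase th (wedge a b).
Proof. by []. Qed.

Lemma degmD m1 m2 : degm (m1 + m2)%MM = addd (degm m1) (degm m2).
Proof.
rewrite /degm /addd /=; congr pair; rewrite -big_split /=; apply: eq_bigr => i _;
  by rewrite mnmDE PoszD mulrDl.
Qed.

Lemma degmU i : degm U_(i)%MM = degz i.
Proof.
have sum_U (f : 'I_4 -> int) : \sum_(k < 4) (U_(i)%MM k)%:Z * f k = f i.
  rewrite (bigD1 i) // big1 ?addr0; first by rewrite mnm1E eqxx /= mul1r addr0.
  by move=> k ne_ki; rewrite mnm1E eq_sym (negbTE ne_ki) mul0r.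
by rewrite /degm !sum_U; case: (degz i).
Qed.

Definition dual_idx (j : 'I_4) : 'I_4 := inord ((j + 2) %% 4).

Lemma zlowE j : zlow j = 2^-1 *: 'X_[U_(dual_idx j)].
Proof.
rewrite /zlow (bigD1 (dual_idx j)) //= big1 ?addr0.
  by rewrite /gmet /dual_idx /= inordK ?ltn_mod // eqxx.
move=> k ne_k; rewrite /gmet; case: eqP => [E|]; last by rewrite scale0r.
by case/eqP: ne_k; apply: val_inj; rewrite /dual_idx /= inordK ?ltn_mod // E.
Qed.

Lemma degz_dual_idx j : degz (dual_idx j) = oppd (degz j).
Proof.
by case: j => [[|[|[|[|?]]]] Hj] //; rewrite /dual_idx /degz /oppd /= inordK.
Qed.

Section TwistStar.
Variable th : Rdefinitions.R.

Lemma twistE b d :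
  twist th b d = linext (fun m => Defs.sigma th (degm m) d *: 'X_[m]) b.
Proof. by apply: eq_bigr => m _; rewrite scalerA. Qed.

Lemma twistX m d : twist th 'X_[m] d = Defs.sigma th (degm m) d *: 'X_[m].
Proof. by rewrite twistE linextX. Qed.

Lemma twist0 d : twist th 0 d = 0.
Proof. by rewrite twistE linext0. Qed.

Lemma twistD p q d : twist th (p + q) d = twist th p d + twist th q d.
Proof. by rewrite !twistE linextD. Qed.

Lemma twistZ c p d : twist th (c *: p) d = c *: twist th p d.
Proof. by rewrite !twistE linextZ. Qed.

Lemma twistN p d : twist th (- p) d = - twist th p d.
Proof. by rewrite -scaleN1r twistZ scaleN1r. Qed.

Lemma twist_sum I (r : seq I) (P : pred I) (F : I -> Alg) d :
  twist th (\sum_(i <- r | P i) F i) d = \sum_(i <- r | P i) twist th (F i) d.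
Proof.
rewrite twistE (big_morph _ (linextD _) (linext0 _)).
by under eq_bigr do rewrite -twistE.
Qed.

Lemma twistK d : cancel (twist th ^~ d) (twist th ^~ (oppd d)).
Proof.
move=> p; rewrite [twist th p d]twistE twistE linext_comp -[RHS]linext_id.
apply: eq_linext => m /=; rewrite linextZ linextX scalerA !sigmaE phaseD.
have -> : wedge (degm m) d + wedge (degm m) (oppd d) = 0 by rewrite /wedge /=; ring.
by rewrite phase0 scale1r.
Qed.

Lemma starE a b : star th a b = linext (fun m => star th 'X_[m] b) a.
Proof.
rewrite /star /linext; apply: eq_bigr => m _.
rewrite msuppX big_seq1 scaler_sumr; apply: eq_bigr => n _.
by rewrite scalerA mcoeffX eqxx mul1r mulrA.
Qed.

Lemma star0 b : star th 0 b = 0.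
Proof. by rewrite starE linext0. Qed.

Lemma starD p q b : star th (p + q) b = star th p b + star th q b.
Proof. by rewrite !(starE _ b) linextD. Qed.

Lemma starZ c p b : star th (c *: p) b = c *: star th p b.
Proof. by rewrite !(starE _ b) linextZ. Qed.

Lemma starXZ u v c : c != 0 ->
  star th 'X_[u] (c *: 'X_[v]) = (c * Defs.sigma th (degm u) (degm v)) *: 'X_[(u + v)%MM].
Proof.
move=> c0; rewrite /star msuppX big_seq1 msuppMCX // big_seq1.
by rewrite mcoeffX eqxx mul1r mcoeffZ mcoeffX eqxx mulr1.
Qed.

Lemma starXX u v :
  star th 'X_[u] 'X_[v] = Defs.sigma th (degm u) (degm v) *: 'X_[(u + v)%MM].
Proof. by rewrite -[X in star _ _ X]scale1r starXZ ?oner_eq0 // mul1r. Qed.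

End TwistStar.

(* the phase picked up by [gamma_theta^j gamma_theta^i] on a spinor of degree [e] *)
Definition gamma2_phase th (j i : 'I_4) (e : deg2) : Cx :=
  Defs.sigma th (degz j) (addd (degz i) e) * Defs.sigma th (degz i) e.

Lemma twist_star_derivX th i j e m :
  gamma2_phase th j i e *:
    twist th (star th (twist th (mderiv i 'X_[m]) (oppd (degz i))) (zlow j))
      (addd (addd (degz i) (degz j)) e)
  = mderiv i (twist th 'X_[m] e) * zlow j.
Proof.
rewrite twistX mderivZ mderivX zlowE.
have [->|m_i_gt0] := posnP (m i).
  by rewrite mulr0n !scale0r twist0 star0 twist0 !scaler0 mul0r.
set m' := (m - U_(i))%MM.
have Em : m = (m' + U_(i))%MM.
  rewrite submK //; apply/mnm_lepP => k; rewrite mnm1E.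
  by case: eqP => [<-|].
have inv2_neq0 : (2^-1 : Cx) != 0 by rewrite invr_eq0 Num.Theory.pnatr_eq0.
rewrite twistZ twistX !starZ starXZ // !twistZ twistX.
rewrite -!scalerAl -scalerAr -mpolyXD !scalerA; congr (_ *: _).
rewrite {2}Em !degmD !degmU degz_dual_idx /gamma2_phase !sigmaE.
(* all phases combine to [sigma (degm m) e], the one of [twist th 'X_[m] e] *)
have shuffle (p1 p2 p3 p4 p5 p c : Cx) : p1 * p2 * p3 * p4 * p5 = p ->
    p1 * p2 * (c * p3 * (2^-1 * p4)) * p5 = p * c / 2.
  by move=> <-; ring.
apply: shuffle; rewrite !phaseD; congr (phase th _).
by rewrite /wedge /addd /oppd /=; ring.
Qed.

Lemma twist_star_deriv th i j e x :
  gamma2_phase th j i e *: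
    twist th (star th (twist th (mderiv i x) (oppd (degz i))) (zlow j))
      (addd (addd (degz i) (degz j)) e)
  = mderiv i (twist th x e) * zlow j.
Proof.
elim/mpolyind: x => [|c m p _ _ IH].
  by rewrite mderiv0 !twist0 mderiv0 star0 twist0 scaler0 mul0r.
rewrite twistD twistZ mderivD mderivZ mulrDl -scalerAl -IH -twist_star_derivX.
by rewrite mderivD mderivZ twistD twistZ starD starZ twistD twistZ scalerDr !scalerA mulrC.
Qed.

Lemma sigma_commute_coeff th (Rm : 'I_4 -> 'I_4 -> Cx) i j :
  star th 'X_j 'X_i = Rm i j *: star th 'X_i 'X_j ->
  Defs.sigma th (degz j) (degz i) = Rm i j * Defs.sigma th (degz i) (degz j).
Proof.
rewrite !starXX !degmU scalerA addmC => /(congr1 (mcoeff (U_(i) + U_(j))%MM)).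
by rewrite !mcoeffZ mcoeffX eqxx !mulr1.
Qed.

Section Gamma.
Variable g : 'I_4 -> 'M[Cx]_4.
Hypothesis hom : gamma_homogeneous g.

Lemma gamma_mul_homogeneous i j k l : (g j *m g i) k l != 0 ->
  dege k = addd (addd (degz i) (degz j)) (dege l).
Proof.
rewrite mxE => /eqP nz.
have [p|all0] := pickP (fun p => g j k p * g i p l != 0); last first.
  by case: nz; apply: big1 => p _; apply/eqP; rewrite -[_ == 0]negbK all0.
rewrite mulf_eq0 negb_or => /andP[/hom -> /hom ->].
by rewrite /addd /=; congr pair; ring.
Qed.

Lemma gamma_commutator_homogeneous i j k l : (g j *m g i - g i *m g j) k l != 0 ->
  dege k = addd (addd (degz i) (degz j)) (dege l).
Proof.
rewrite mx_entryB => nz.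
have [ji0|/gamma_mul_homogeneous //] := eqVneq ((g j *m g i) k l) 0.
have /gamma_mul_homogeneous -> : (g i *m g j) k l != 0.
  by apply: contraNneq nz => ->; rewrite ji0 subr0.
by rewrite [addd (degz j) _]adddC.
Qed.

Lemma mul_gammath_entry th i j k l :
  (gammath th g j *m gammath th g i) k l
  = gamma2_phase th j i (dege l) * (g j *m g i) k l.
Proof.
rewrite !mxE mulr_sumr; apply: eq_bigr => p _; rewrite !mxE.
have [->|nz] := eqVneq (g i p l) 0; first by rewrite !mulr0.
rewrite (hom nz) /gamma2_phase; ring.
Qed.

Lemma commth_entry th Rm i j k l :
  Defs.sigma th (degz j) (degz i) = Rm i j * Defs.sigma th (degz i) (degz j) ->
  commth th g Rm j i k l = gamma2_phase th j i (dege l) * (g j *m g i - g i *m g j) k l.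
Proof.
move=> hR; rewrite /commth !mx_entryB mx_entryZ.
rewrite !mul_gammath_entry mulrBr; congr (_ - _).
rewrite mulrA; congr (_ * _); rewrite /gamma2_phase !sigmaE !phaseD in hR *.
set w_e := wedge (degz i) (dege l) + wedge (degz j) (dege l).
have -> : wedge (degz i) (addd (degz j) (dege l)) + wedge (degz j) (dege l)
          = wedge (degz i) (degz j) + w_e by rewrite /w_e /wedge /addd /=; ring.
have -> : wedge (degz j) (addd (degz i) (dege l)) + wedge (degz i) (dege l)
          = wedge (degz j) (degz i) + w_e by rewrite /w_e /wedge /addd /=; ring.
by rewrite -!(phaseD th (wedge _ _)) hR; ring.
Qed.

End Gamma.

Section DiracOperators.
Variables (th : Rdefinitions.R) (g : 'I_4 -> 'M[Cx]_4) (Rm : 'I_4 -> 'I_4 -> Cx).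
Variable dth : 'I_4 -> Alg -> Alg.
Hypothesis hom : gamma_homogeneous g.
Hypothesis hR : forall i j, star th 'X_j 'X_i = Rm i j *: star th 'X_i 'X_j.
Hypothesis hd : forall a i, twist th (dth i a) (degz i) = mderiv i a.

Lemma dthE i a : dth i a = twist th (mderiv i a) (oppd (degz i)).
Proof. by rewrite -hd twistK. Qed.

Lemma twist_DB_term i j k l a :
  commth th g Rm j i k l *: twist th (star th (dth i a) (zlow j)) (dege k)
  = (g j *m g i - g i *m g j) k l *: (mderiv i (twist th a (dege l)) * zlow j).
Proof.
rewrite (commth_entry hom k l (sigma_commute_coeff (hR i j))).
have [->|nz] := eqVneq ((g j *m g i - g i *m g j) k l) 0.
  by rewrite mulr0 !scale0r.
rewrite (gamma_commutator_homogeneous hom nz) dthE mulrC -scalerA.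
by rewrite twist_star_deriv.
Qed.

Lemma to_classical_DB s : to_classical th (DB th g Rm dth s) =1 DCL g (to_classical th s).
Proof.
move=> k; rewrite /to_classical /DB /DCL twistD twistN !twistZ twist_sum.
congr (_ *: _ - _); apply: eq_bigr => i _; rewrite twist_sum.
apply: eq_bigr => j _; rewrite twist_sum.
by apply: eq_bigr => l _; rewrite twistZ twist_DB_term.
Qed.

End DiracOperators.

Theorem proposition4p12
  (th : Rdefinitions.R)
  (g : 'I_4 -> 'M[Cx]_4)
  (Rm : 'I_4 -> 'I_4 -> Cx)
  (dth : 'I_4 -> Alg -> Alg)
  (hhom : gamma_homogeneous g)
  (hcl : gamma_clifford g)
  (hR : forall i j : 'I_4,
      star th 'X_j 'X_i = Rm i j *: star th 'X_i 'X_j)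
  (hd : forall (a : Alg) (i : 'I_4), twist th (dth i a) (degz i) = mderiv i a) :
  forall s : spinor, exists t : spinor, forall k : 'I_4,
    to_classical th (DB th g Rm dth s) k - DCL g (to_classical th s) k = fsph * t k.
Proof.
move=> s; exists (fun _ => 0) => k.
by rewrite (to_classical_DB hhom hR hd) subrr mulr0.
Qed.
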